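(* Assume $\ker(K)\cap\ker(D)=\{0\}$ and fix $\delta\ge0$ and data $y^\delta$. Let $\{\Psi_k\}_{k\in\mathbb{N}}$ be reconstructors and $\Psi$ a reconstructor such that $\sup_{y\in\mathcal{Y}^\delta}\|\Psi_k(y)-\Psi(y)\|_1\to0$ as $k\to\infty$, where $\mathcal{Y}^\delta=\{y\in\mathbb{R}^m:\inf_{x\in\mathcal{X}}\|Kx-y\|_2\le\delta\}$. For each $k$ let $x^*_{\Psi_k,\delta}$ be the unique minimizer over $\mathcal{X}$ of $\mathcal{J}_{\Psi_k,\delta}(x)=\|Kx-y^\delta\|_2^2+\lambda\|w(\Psi_k(y^\delta))\odot|Dx|\|_1$. Then the sequence $\{x^*_{\Psi_k,\delta}\}_{k\in\mathbb{N}}$ is bounded.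
   Context: Let $K\in\mathbb{R}^{m\times n}$ with $m\le n$, and let $D_h,D_v\in\mathbb{R}^{n\times n}$ be the discrete horizontal and vertical difference operators; $Dx=\begin{bmatrix}D_hx\\ D_vx\end{bmatrix}\in\mathbb{R}^{2n}$, and $|Dx|\in\mathbb{R}^n$, $(|Dx|)_i=\sqrt{(D_hx)_i^2+(D_vx)_i^2}$. $\mathcal{X}=\{x\in\mathbb{R}^n: x_i\ge 0\ \forall i\}$. Fix $\lambda>0$, $\eta>0$, $p\in(0,1)$, and for $\tilde x\in\mathbb{R}^n$ define $(w(\tilde{x}))_i=\big(\eta/\sqrt{\eta^2+(|D\tilde{x}|)_i^2}\big)^{1-p}$. A reconstructor is a Lipschitz continuous map $\Psi:\mathbb{R}^m\to\mathbb{R}^n$. The data is $y^\delta=Kx^{GT}+e$ with $x^{GT}\in\mathcal{X}$ and $\|e\|_2\le\delta$. $\odot$ is the entrywise product. *)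

From HB Require Import structures.
From mathcomp Require Import all_boot all_order all_algebra.
From mathcomp Require Import classical_sets reals exp.
Set Implicit Arguments. Unset Strict Implicit. Unset Printing Implicit Defensive.
Import Order.TTheory GRing.Theory Num.Theory.
Local Open Scope classical_set_scope.
Local Open Scope ring_scope.

Definition norm2 (R : realType) (k : nat) (v : 'cV[R]_k) : R :=
  Num.sqrt (\sum_(i < k) v i 0 ^+ 2).
Definition norm1 (R : realType) (k : nat) (v : 'cV[R]_k) : R :=
  \sum_(i < k) `|v i 0|.

(* the nonnegative orthant X *)
Definition nonneg (R : realType) (n : nat) (x : 'cV[R]_n) : Prop :=
  forall i, 0 <= x i 0.

Definition Dop (R : realType) (n : nat) (Dh Dv : 'M[R]_n) (x : 'cV[R]_n)
  : 'cV[R]_(n + n) := col_mx (Dh *m x) (Dv *m x).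

Definition absD (R : realType) (n : nat) (Dh Dv : 'M[R]_n) (x : 'cV[R]_n)
  : 'cV[R]_n :=
  \col_i Num.sqrt ((Dh *m x) i 0 ^+ 2 + (Dv *m x) i 0 ^+ 2).

Definition weight (R : realType) (n : nat) (Dh Dv : 'M[R]_n) (eta p : R)
  (xt : 'cV[R]_n) : 'cV[R]_n :=
  \col_i powR (eta / Num.sqrt (eta ^+ 2 + absD Dh Dv xt i 0 ^+ 2)) (1 - p).

Definition Jfun (R : realType) (m n : nat) (K : 'M[R]_(m, n)) (Dh Dv : 'M[R]_n)
  (lam eta p : R) (y : 'cV[R]_m) (xt : 'cV[R]_n) (x : 'cV[R]_n) : R :=
  norm2 (K *m x - y) ^+ 2
  + lam * norm1 (\col_i (weight Dh Dv eta p xt i 0 * absD Dh Dv x i 0)).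

Definition Ydelta (R : realType) (m n : nat) (K : 'M[R]_(m, n)) (delta : R)
  (y : 'cV[R]_m) : Prop :=
  inf [set r : R | exists2 x, nonneg x & r = norm2 (K *m x - y)] <= delta.

(* reconstructor = Lipschitz continuous map R^m -> R^n (w.r.t. Euclidean norms) *)
Definition lipschitz (R : realType) (m n : nat) (Psi : 'cV[R]_m -> 'cV[R]_n)
  : Prop :=
  exists L : R, forall y1 y2, norm2 (Psi y1 - Psi y2) <= L * norm2 (y1 - y2).

(* A minimizer of J does no worse than x = 0, so both its data-fit term and its
   weighted total variation are bounded by ||y||^2.  The weights are bounded
   below uniformly in k: Psi_k(y) converges, hence stays bounded, and w(x~)_i
   only decreases as |D x~|_i grows.  So |D x_k| is uniformly bounded, K x_k
   is bounded by the fit term, and a left inverse of the injective stacked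
   operator [K; D_h; D_v] bounds x_k itself. *)

From HB Require Import structures.
From mathcomp Require Import all_boot all_order all_algebra.
From mathcomp Require Import classical_sets reals exp lra.
Import Order.TTheory GRing.Theory Num.Theory.
Local Open Scope ring_scope.

Lemma mx_left_inverse (F : fieldType) (m n : nat) (A : 'M[F]_(m, n)) :
  (forall x : 'cV[F]_n, A *m x = 0 -> x = 0) ->
  exists B : 'M[F]_(n, m), B *m A = 1%:M.
Proof.
move=> injA; apply/row_fullP; rewrite -cokermx_eq0; apply/eqP/matrixP => i j.
have /injA : A *m col j (cokermx A) = 0 by rewrite colE mulmxA mulmx_coker mul0mx.
by move/colP/(_ i); rewrite !mxE.
Qed.

Section Norms.
Context {R : realType}.

Lemma ler_sum_term {I : finType} (F : I -> R) (i : I) :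
  (forall j, 0 <= F j) -> F i <= \sum_j F j.
Proof. by move=> F_ge0; rewrite (bigD1 i) //= lerDl sumr_ge0. Qed.

Lemma norm1_ge0 {k} (v : 'cV[R]_k) : 0 <= norm1 v.
Proof. exact: sumr_ge0. Qed.

Lemma norm2_ge0 {k} (v : 'cV[R]_k) : 0 <= norm2 v.
Proof. exact: sqrtr_ge0. Qed.

Lemma entry_le_norm1 {k} (v : 'cV[R]_k) i : `|v i 0| <= norm1 v.
Proof. by rewrite /norm1; apply: (ler_sum_term (fun j => `|v j 0|) i). Qed.

Lemma entry_le_norm2 {k} (v : 'cV[R]_k) i : `|v i 0| <= norm2 v.
Proof.
rewrite -sqrtr_sqr; apply: ler_wsqrtr.
by apply: (ler_sum_term (fun j => v j 0 ^+ 2) i) => j; exact: sqr_ge0.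
Qed.

Lemma norm1_le_norm2 {k} (v : 'cV[R]_k) : norm1 v <= k%:R * norm2 v.
Proof.
have -> : k%:R * norm2 v = \sum_(i < k) norm2 v.
  by rewrite sumr_const card_ord mulr_natl.
by apply: ler_sum => i _; exact: entry_le_norm2.
Qed.

Lemma norm2_le_norm1 {k} (v : 'cV[R]_k) : norm2 v <= norm1 v.
Proof.
rewrite -(ger0_norm (norm1_ge0 v)) -sqrtr_sqr; apply: ler_wsqrtr.
rewrite expr2 mulr_suml; apply: ler_sum => i _.
by rewrite -real_normK ?num_real // expr2 ler_wpM2l ?entry_le_norm1.
Qed.

Lemma norm2N {k} (v : 'cV[R]_k) : norm2 (- v) = norm2 v.
Proof. by congr Num.sqrt; apply: eq_bigr => i _; rewrite mxE sqrrN. Qed.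

Lemma norm1D {k} (u v : 'cV[R]_k) : norm1 (u + v) <= norm1 u + norm1 v.
Proof. by rewrite -big_split; apply: ler_sum => i _; rewrite mxE ler_normD. Qed.

Lemma norm1_col_mx {k l} (u : 'cV[R]_k) (w : 'cV[R]_l) :
  norm1 (col_mx u w) = norm1 u + norm1 w.
Proof.
rewrite /norm1 big_split_ord.
by congr (_ + _); apply: eq_bigr => i _; rewrite ?col_mxEu ?col_mxEd.
Qed.

Lemma norm1_weighted_ge {k} (c : R) (w a : 'cV[R]_k) :
  0 <= c -> (forall i, c <= w i 0) -> c * norm1 a <= norm1 (\col_i (w i 0 * a i 0)).
Proof.
move=> c_ge0 w_ge; rewrite /norm1 mulr_sumr; apply: ler_sum => i _.
by rewrite mxE normrM ler_wpM2r // (le_trans (w_ge i)) ?ler_norm.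
Qed.

Definition mx_abs_sum {k l} (A : 'M[R]_(k, l)) : R := \sum_i \sum_j `|A i j|.

Lemma mx_abs_sum_ge0 {k l} (A : 'M[R]_(k, l)) : 0 <= mx_abs_sum A.
Proof. by apply: sumr_ge0 => i _; exact: sumr_ge0. Qed.

Lemma norm1_mulmx_le {k l} (A : 'M[R]_(k, l)) (v : 'cV[R]_l) :
  norm1 (A *m v) <= mx_abs_sum A * norm1 v.
Proof.
rewrite /mx_abs_sum mulr_suml; apply: ler_sum => i _; rewrite mxE mulr_suml.
apply: le_trans (ler_norm_sum _ _ _) _; apply: ler_sum => j _.
by rewrite normrM ler_wpM2l ?entry_le_norm1.
Qed.

Lemma norm1_bounded_of_cvg {k} (u : nat -> 'cV[R]_k) (l : 'cV[R]_k) :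
  (forall eps : R, 0 < eps ->
     exists N : nat, forall t, (N <= t)%N -> norm1 (u t - l) <= eps) ->
  exists M : R, forall t, norm1 (u t) <= M.
Proof.
move=> /(_ 1 ltr01) [N near_l].
exists (norm1 l + 1 + \sum_(t < N) norm1 (u t)) => t.
have head_ge0 : 0 <= \sum_(t < N) norm1 (u t).
  by apply: sumr_ge0 => s _; exact: norm1_ge0.
have l_ge0 := norm1_ge0 l.
have [/near_l tail|t_lt] := leqP N t.
  have := norm1D (u t - l) l; rewrite subrK; lra.
have := ler_sum_term (fun s : 'I_N => norm1 (u s)) (Ordinal t_lt) (fun s => norm1_ge0 _).
rewrite /=; lra.
Qed.

End Norms.

Lemma norm_le_sqrt_sum_sqr {R : rcfType} (a b : R) :
  `|a| <= Num.sqrt (a ^+ 2 + b ^+ 2).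
Proof. by rewrite -sqrtr_sqr ler_wsqrtr // lerDl sqr_ge0. Qed.

Lemma sqrt_sum_sqr_le {R : rcfType} (a b : R) :
  Num.sqrt (a ^+ 2 + b ^+ 2) <= `|a| + `|b|.
Proof.
rewrite -(ger0_norm (addr_ge0 (normr_ge0 a) (normr_ge0 b))) -sqrtr_sqr ler_wsqrtr //.
rewrite -[a ^+ 2]real_normK ?num_real // -[b ^+ 2]real_normK ?num_real //.
by rewrite sqrrD -addrA lerD2l lerDr mulrn_wge0 // mulr_ge0.
Qed.

Section TotalVariation.
Context {R : realType} {n : nat} (Dh Dv : 'M[R]_n).

Lemma Dop_mulmx (x : 'cV[R]_n) : Dop Dh Dv x = col_mx Dh Dv *m x.
Proof. by rewrite mul_col_mx. Qed.

Lemma absD_ge0 (x : 'cV[R]_n) i : 0 <= absD Dh Dv x i 0.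
Proof. by rewrite mxE sqrtr_ge0. Qed.

Lemma absD_le_norm1_Dop (x : 'cV[R]_n) i :
  absD Dh Dv x i 0 <= norm1 (Dop Dh Dv x).
Proof.
rewrite mxE norm1_col_mx; apply: le_trans (sqrt_sum_sqr_le _ _) _.
by rewrite lerD ?entry_le_norm1.
Qed.

Lemma absD_ge_h (x : 'cV[R]_n) i : `|(Dh *m x) i 0| <= absD Dh Dv x i 0.
Proof. by rewrite [in X in _ <= X]mxE norm_le_sqrt_sum_sqr. Qed.

Lemma absD_ge_v (x : 'cV[R]_n) i : `|(Dv *m x) i 0| <= absD Dh Dv x i 0.
Proof. by rewrite [in X in _ <= X]mxE addrC norm_le_sqrt_sum_sqr. Qed.

Lemma norm1_Dop_le (x : 'cV[R]_n) :
  norm1 (Dop Dh Dv x) <= 2 * norm1 (absD Dh Dv x).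
Proof.
have norm1_absD : norm1 (absD Dh Dv x) = \sum_i absD Dh Dv x i 0.
  by apply: eq_bigr => i _; rewrite ger0_norm ?absD_ge0.
rewrite norm1_col_mx mulr2n mulrDl mul1r norm1_absD.
by apply: lerD; apply: ler_sum => i _; rewrite ?absD_ge_h ?absD_ge_v.
Qed.

Lemma weight_ge (eta p a : R) (xt : 'cV[R]_n) i :
  0 < eta -> 0 <= p -> absD Dh Dv xt i 0 <= a ->
  eta / Num.sqrt (eta ^+ 2 + a ^+ 2) <= weight Dh Dv eta p xt i 0.
Proof.
move=> eta_gt0 p_ge0 le_a; rewrite mxE.
set d := absD Dh Dv xt i 0.
have d_ge0 : 0 <= d by exact: absD_ge0.
have root_gt0 b : 0 < Num.sqrt (eta ^+ 2 + b ^+ 2).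
  by rewrite sqrtr_gt0 ltr_pwDl ?sqr_ge0 ?exprn_gt0.
apply: le_trans (ger1_powR _ _); last by rewrite lerBlDr lerDl.
  rewrite ler_pM2l // lef_pV2 ?posrE // ler_wsqrtr // lerD2l.
  by rewrite ler_sqr ?nnegrE // (le_trans d_ge0).
rewrite divr_gt0 //= ler_pdivrMr // mul1r.
by rewrite -[X in X <= _]gtr0_norm // norm_le_sqrt_sum_sqr.
Qed.

End TotalVariation.

Lemma Ydelta_noisy_data (R : realType) (m n : nat) (K : 'M[R]_(m, n)) (delta : R)
    (x : 'cV[R]_n) (e : 'cV[R]_m) :
  nonneg x -> norm2 e <= delta -> Ydelta K delta (K *m x + e).
Proof.
move=> x_ge0 e_le; apply: le_trans e_le.
have -> : norm2 e = norm2 (K *m x - (K *m x + e)) by rewrite opprD addNKr norm2N.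
by apply: ge_inf; [exists 0 => _ [z _ ->]; exact: norm2_ge0 | exists x].
Qed.

Section Minimizers.
Variables (R : realType) (m n : nat) (K : 'M[R]_(m, n)) (Dh Dv : 'M[R]_n).
Variables (lam eta p : R) (y : 'cV[R]_m) (xt : 'cV[R]_n).
Let J := Jfun K Dh Dv lam eta p y xt.

Lemma Jfun0 : J 0 = norm2 y ^+ 2.
Proof.
rewrite /J /Jfun mulmx0 sub0r norm2N /norm1 big1 ?mulr0 ?addr0 // => i _.
by rewrite /absD !mulmx0 !mxE expr0n /= addr0 sqrtr0 mulr0 normr0.
Qed.

Lemma norm1_le_of_Jfun_le_Jfun0 (B : 'M[R]_(n, m + (n + n))) (c : R) (x : 'cV[R]_n) :
  0 < lam -> 0 < c -> B *m col_mx K (col_mx Dh Dv) = 1%:M ->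
  (forall i, c <= weight Dh Dv eta p xt i 0) -> J x <= J 0 ->
  norm1 x <= mx_abs_sum B * (m%:R * norm2 y + norm1 y + 2 * (norm2 y ^+ 2 / (lam * c))).
Proof.
move=> lam_gt0 c_gt0 BA w_ge; rewrite Jfun0 /J /Jfun.
set fit := norm2 _; set reg := norm1 _ => J_le.
have fit_ge0 : 0 <= fit := norm2_ge0 _.
have reg_ge0 : 0 <= reg := norm1_ge0 _.
have y_ge0 := norm2_ge0 y.
have fit_le : fit <= norm2 y by nra.
have reg_le : lam * reg <= norm2 y ^+ 2 by nra.
have TV_le : norm1 (absD Dh Dv x) <= norm2 y ^+ 2 / (lam * c).
  have := norm1_weighted_ge c _ (absD Dh Dv x) (ltW c_gt0) w_ge; rewrite -/reg => wTV.
  rewrite ler_pdivlMr ?mulr_gt0 //; nra.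
have Kx_le : norm1 (K *m x) <= m%:R * norm2 y + norm1 y.
  have := norm1D (K *m x - y) y; rewrite subrK => /le_trans; apply.
  by rewrite lerD2r (le_trans (norm1_le_norm2 _)) // ler_wpM2l.
have Dx_le : norm1 (Dop Dh Dv x) <= 2 * (norm2 y ^+ 2 / (lam * c)).
  by apply: le_trans (norm1_Dop_le _ _ _) _; rewrite ler_wpM2l.
rewrite -[x]mul1mx -BA -mulmxA; apply: le_trans (norm1_mulmx_le _ _) _.
by rewrite ler_wpM2l ?mx_abs_sum_ge0 // mul_col_mx -Dop_mulmx norm1_col_mx lerD.
Qed.

End Minimizers.

Theorem lemma10 (R : realType) (m n : nat) (K : 'M[R]_(m, n))
  (Dh Dv : 'M[R]_n) (lam eta p : R) (delta : R)
  (xGT : 'cV[R]_n) (e : 'cV[R]_m) (ydelta : 'cV[R]_m)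
  (Psik : nat -> 'cV[R]_m -> 'cV[R]_n) (Psi : 'cV[R]_m -> 'cV[R]_n)
  (xstar : nat -> 'cV[R]_n) :
  (m <= n)%N ->
  0 < lam -> 0 < eta -> 0 < p -> p < 1 ->
  (forall x : 'cV[R]_n, K *m x = 0 -> Dop Dh Dv x = 0 -> x = 0) ->
  0 <= delta ->
  nonneg xGT -> norm2 e <= delta -> ydelta = K *m xGT + e ->
  (forall k, lipschitz (Psik k)) -> lipschitz Psi ->
  (forall eps : R, 0 < eps -> exists N : nat, forall k : nat, (N <= k)%N ->
     forall y, Ydelta K delta y -> norm1 (Psik k y - Psi y) <= eps) ->
  (forall k, nonneg (xstar k) /\
     (forall x, nonneg x ->
        Jfun K Dh Dv lam eta p ydelta (Psik k ydelta) (xstar k)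
        <= Jfun K Dh Dv lam eta p ydelta (Psik k ydelta) x) /\
     (forall x', nonneg x' ->
        (forall x, nonneg x ->
           Jfun K Dh Dv lam eta p ydelta (Psik k ydelta) x'
           <= Jfun K Dh Dv lam eta p ydelta (Psik k ydelta) x) ->
        x' = xstar k)) ->
  exists M : R, forall k, norm2 (xstar k) <= M.
Proof.
move=> _ lam_gt0 eta_gt0 p_gt0 _ injKD _ xGT_ge0 e_le -> _ _ Psik_cvg xstar_min.
set y := K *m xGT + e.
have [P Psik_le] : exists P, forall k, norm1 (Psik k y) <= P.
  apply: (norm1_bounded_of_cvg _ (Psi y)) => eps /Psik_cvg [N near_Psi].
  by exists N => k /near_Psi; apply; exact: Ydelta_noisy_data.
have [B BA] : exists B : 'M[R]_(n, m + (n + n)),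
    B *m col_mx K (col_mx Dh Dv) = 1%:M.
  apply: mx_left_inverse => x; rewrite mul_col_mx -Dop_mulmx -col_mx0.
  by case/eq_col_mx; exact: injKD.
set c := eta / Num.sqrt (eta ^+ 2 + (mx_abs_sum (col_mx Dh Dv) * P) ^+ 2).
have c_gt0 : 0 < c by rewrite divr_gt0 // sqrtr_gt0 ltr_pwDl ?sqr_ge0 ?exprn_gt0.
have w_ge k i : c <= weight Dh Dv eta p (Psik k y) i 0.
  apply: weight_ge => //; first exact: ltW.
  apply: le_trans (absD_le_norm1_Dop _ _ _ _) _; rewrite Dop_mulmx.
  by apply: le_trans (norm1_mulmx_le _ _) _; rewrite ler_wpM2l ?mx_abs_sum_ge0.
exists (mx_abs_sum B *
  (m%:R * norm2 y + norm1 y + 2 * (norm2 y ^+ 2 / (lam * c)))) => k.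
have [_ [xk_min _]] := xstar_min k.
apply: le_trans (norm2_le_norm1 _) _.
apply: norm1_le_of_Jfun_le_Jfun0 BA (w_ge k) _ => //.
by apply: xk_min => i; rewrite mxE.
Qed.
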